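(* Let $\mathcal{A}=\{1,\dots,N\}$, $\boldsymbol{\lambda}\in\mathbb{R}_+^N$, $\boldsymbol{\delta}\in\mathbb{R}^N$ with $\delta_i>0$, $B\in\mathbb{R}_+^{N\times N}$ with zero diagonal whose associated directed graph is weakly connected but not strongly connected, $\mathcal{S}\subset\mathbb{R}_+^N$ convex, $w:\mathbb{R}_+^N\to\mathbb{R}$ convex, $\mathbf{c}\in\mathbb{R}_+^N$, and $q_i:\mathbb{R}_+\to(0,1]$ decreasing, strictly convex, continuously differentiable. For $\mathbf{s}\in\mathcal{S}$ let $\bar{\mathbf{p}}^0(\mathbf{s}):=\bar{\mathbf{p}}(\mathbf{s})$ be the unique stable equilibrium of $\dot{\mathbf{p}}=(\mathbf{1}-\mathbf{p})\circ\mathbf{q}(\mathbf{s})\circ(\boldsymbol{\lambda}+B\mathbf{p})-\boldsymbol{\delta}\circ\mathbf{p}$, and for $\epsilon>0$ let $\bar{\mathbf{p}}^\epsilon(\mathbf{s})>\mathbf{0}$ be the unique strictly positive solution of $(\mathbf{1}-\mathbf{p})\circ(\boldsymbol{\lambda}+\epsilon\mathbf{1}+B\mathbf{p})-\mathbf{q}(\mathbf{s})^{-1}\circ\boldsymbol{\delta}\circ\mathbf{p}=\mathbf{0}$. Define $F^*_\epsilon:=\min_{\mathbf{s}\in\mathcal{S}}\big(w(\mathbf{s})+\mathbf{c}^{\mathsf T}\bar{\mathbf{p}}^\epsilon(\mathbf{s})\big)$ for $\epsilon\ge0$. Then $F^*_\epsilon$ is increasing in $\epsilon\ge0$.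
   Context: $\circ$ is the element-wise product; $\mathbf{q}(\mathbf{s})=(q_i(s_i))_i$ and $\mathbf{q}(\mathbf{s})^{-1}$ is its element-wise inverse. The associated graph has an edge $(j,i)$ iff $b_{i,j}>0$. $\mathbf{c}$ is the vector of loss rates of infected systems, and $F^*_0$ is the optimal average cost of the original (unperturbed) problem. *)

From HB Require Import structures.
From mathcomp Require Import all_boot all_order all_algebra.
From mathcomp Require Import all_classical all_reals.
From mathcomp Require Import ereal topology normedtype derive sequences.
Set Implicit Arguments. Unset Strict Implicit. Unset Printing Implicit Defensive.
Import Order.TTheory GRing.Theory Num.Theory.
Import numFieldNormedType.Exports.
Local Open Scope classical_set_scope.
Local Open Scope ring_scope.

Definition vec (R : realType) (N : nat) := 'I_N -> R.

Definition nonneg_vec (R : realType) N (x : vec R N) := forall i, 0 <= x i.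

Definition vadd (R : realType) N (x y : vec R N) : vec R N := fun i => x i + y i.
Definition vscale (R : realType) N (t : R) (x : vec R N) : vec R N := fun i => t * x i.

Definition mxv (R : realType) N (B : 'M[R]_N) (p : vec R N) : vec R N :=
  fun i => \sum_(j < N) B i j * p j.

Definition convex_subset (R : realType) N (S : set (vec R N)) :=
  forall x y t, S x -> S y -> 0 <= t <= 1 ->
    S (vadd (vscale t x) (vscale (1 - t) y)).

Definition convex_on_nonneg (R : realType) N (w : vec R N -> R) :=
  forall x y t, nonneg_vec x -> nonneg_vec y -> 0 <= t <= 1 ->
    w (vadd (vscale t x) (vscale (1 - t) y)) <= t * w x + (1 - t) * w y.

Definition admissible_q (R : realType) (q : R -> R) :=
  [/\ (forall x, 0 <= x -> 0 < q x <= 1),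
      (forall x y, 0 <= x -> x < y -> q y < q x),
      (forall x y t, 0 <= x -> 0 <= y -> x != y -> 0 < t < 1 ->
         q (t * x + (1 - t) * y) < t * q x + (1 - t) * q y),
      (forall x, 0 <= x -> derivable q x 1) &
      {within `[0, +oo[, continuous (derive1 q)}].

Definition edge (R : realType) N (B : 'M[R]_N) : rel 'I_N := fun j i => 0 < B i j.

Definition strongly_connected (R : realType) N (B : 'M[R]_N) :=
  forall i j : 'I_N, connect (edge B) i j.

Definition weakly_connected (R : realType) N (B : 'M[R]_N) :=
  forall i j : 'I_N, connect (fun a b => edge B a b || edge B b a) i j.

Definition qvec (R : realType) N (q : 'I_N -> R -> R) (s : vec R N) : vec R N :=
  fun i => q i (s i).

Definition sis_field (R : realType) N (lam delta : vec R N) (B : 'M[R]_N)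
  (q : 'I_N -> R -> R) (s : vec R N) (p : vec R N) : vec R N :=
  fun i => (1 - p i) * qvec q s i * (lam i + mxv B p i) - delta i * p i.

Definition in_unit_cube (R : realType) N (p : vec R N) := forall i, 0 <= p i <= 1.

Definition is_equilibrium (R : realType) N (f : vec R N -> vec R N) (pe : vec R N) :=
  in_unit_cube pe /\ forall i, f pe i = 0.

Definition ode_solution (R : realType) N (f : vec R N -> vec R N) (x : R -> vec R N) :=
  forall t : R, 0 <= t -> forall i, is_derive t (1 : R) (fun u => x u i) (f (x t) i).

Definition lyapunov_stable (R : realType) N (f : vec R N -> vec R N) (pe : vec R N) :=
  forall e : R, 0 < e -> exists2 d : R, 0 < d &
    forall x : R -> vec R N, ode_solution f x -> in_unit_cube (x 0) ->
      (forall i, `|x 0 i - pe i| < d) ->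
      forall t : R, 0 <= t -> forall i, `|x t i - pe i| < e.

Definition stable_equilibrium (R : realType) N (f : vec R N -> vec R N) (pe : vec R N) :=
  is_equilibrium f pe /\ lyapunov_stable f pe.

Definition perturbed_eq (R : realType) N (lam delta : vec R N) (B : 'M[R]_N)
  (q : 'I_N -> R -> R) (eps : R) (s : vec R N) (p : vec R N) :=
  forall i, (1 - p i) * (lam i + eps + mxv B p i) - (qvec q s i)^-1 * delta i * p i = 0.

Definition strictly_pos (R : realType) N (p : vec R N) := forall i, 0 < p i.

Definition Fstar (R : realType) N (S : set (vec R N)) (w : vec R N -> R) (c : vec R N)
  (pbar : R -> vec R N -> vec R N) (eps : R) : \bar R :=
  ereal_inf [set ((w s + \sum_(i < N) c i * pbar eps s i)%:E) | s in S].

From mathcomp Require Import ring lra.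
From mathcomp Require Import all_boot all_order all_algebra.
From mathcomp Require Import all_classical all_reals ereal.
Set Implicit Arguments.
Unset Strict Implicit.
Unset Printing Implicit Defensive.
Import Order.TTheory GRing.Theory Num.Theory.
Local Open Scope classical_set_scope.
Local Open Scope ring_scope.

(* Both pbar^0(s) and pbar^eps(s) solve the balance equation
   (1 - p) o (a + B p) = r o p with r := q(s)^-1 o delta and a := lambda + eps 1.
   For this equation a comparison principle holds: a sub-cube solution for a
   source term a lies below any strictly positive solution for a larger positive
   source term b (look at the index maximising x_i / y_i).  Hence pbar^eps(s)
   is pointwise nondecreasing in eps, and since c >= 0 so is the cost of every
   feasible s, which passes to the infimum. *)

Section Balance.

Variables (R : realType) (N : nat) (B : 'M[R]_N).
Hypothesis B_ge0 : forall i j, 0 <= B i j.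

Definition balance_eq (a r p : vec R N) :=
  forall i, (1 - p i) * (a i + mxv B p i) = r i * p i.

Lemma mxv_ge0 (p : vec R N) : nonneg_vec p -> nonneg_vec (mxv B p).
Proof. by move=> p_ge0 i; apply: sumr_ge0 => k _; rewrite mulr_ge0. Qed.

Lemma mxv_le_scale (t : R) (x y : vec R N) :
  (forall k, x k <= t * y k) -> forall i, mxv B x i <= t * mxv B y i.
Proof.
move=> xy i; rewrite /mxv mulr_sumr; apply: ler_sum => k _.
by rewrite mulrCA ler_wpM2l.
Qed.

Lemma balance_eq_le1 (a r p : vec R N) :
  (forall i, 0 < a i) -> (forall i, 0 <= r i) -> nonneg_vec p ->
  balance_eq a r p -> forall i, p i <= 1.
Proof.
move=> a_gt0 r_ge0 p_ge0 bal i; rewrite leNgt; apply/negP => p_gt1.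
have aBp_gt0 : 0 < a i + mxv B p i by rewrite ltr_wpDr ?mxv_ge0.
have : (1 - p i) * (a i + mxv B p i) < 0 by rewrite pmulr_llt0 // subr_lt0.
by rewrite bal ltNge mulr_ge0.
Qed.

Lemma balance_eq_le (a b r x y : vec R N) :
  (forall i, a i <= b i) -> (forall i, 0 < b i) ->
  (forall i, x i <= 1) -> (forall i, 0 < y i) ->
  balance_eq a r x -> balance_eq b r y -> forall j, x j <= y j.
Proof.
move=> ab b_gt0 x_le1 y_gt0 balx baly j; rewrite leNgt; apply/negP => yx_j.
case: (@arg_maxP _ R _ j xpredT (fun k => x k / y k) isT) => i _ max_i.
set t := x i / y i in max_i.
have t_gt1 : 1 < t.
  by apply: lt_le_trans (max_i j isT); rewrite /= ltr_pdivlMr // mul1r.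
have x_le_ty k : x k <= t * y k.
  by have /= := max_i k isT; rewrite ler_pdivrMr // mulrC.
have x_i : x i = t * y i by rewrite /t divfK ?gt_eqF.
set L := b i + mxv B y i.
have L_gt0 : 0 < L by rewrite ltr_wpDr ?mxv_ge0 // => k; apply: ltW.
have source_le : a i + mxv B x i <= t * L.
  have b_le : b i <= t * b i by rewrite ler_peMl ?ltW.
  have := mxv_le_scale x_le_ty i; have := ab i; rewrite /L mulrDr; lra.
(* both sides equal r_i x_i = t r_i y_i *)
have same : (1 - x i) * (a i + mxv B x i) = t * L * (1 - y i).
  by rewrite balx x_i mulrCA -baly /L; ring.
have tL_gt0 : 0 < t * L by rewrite mulr_gt0 // (lt_trans ltr01).
have : t * L * (1 - y i) <= t * L * (1 - x i).
  by rewrite -same [t * L * _]mulrC ler_wpM2l // subr_ge0.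
rewrite ler_pM2l // => le_1.
have : y i < x i by rewrite x_i ltr_pMl.
lra.
Qed.

End Balance.

Lemma Fstar_le_pointwise (R : realType) N (S : set (vec R N))
    (w : vec R N -> R) (c : vec R N) (pbar : R -> vec R N -> vec R N) (e1 e2 : R) :
  nonneg_vec c -> (forall s, S s -> forall i, pbar e1 s i <= pbar e2 s i) ->
  (Fstar S w c pbar e1 <= Fstar S w c pbar e2)%E.
Proof.
move=> c_ge0 le12; apply/ereal_infP => _ [s Ss <-].
apply: ge_ereal_inf; exists (w s + \sum_(i < N) c i * pbar e1 s i)%:E; first by exists s.
by rewrite lee_fin lerD2l; apply: ler_sum => i _; rewrite ler_wpM2l ?le12.
Qed.

Section Equilibria.

Variables (R : realType) (N : nat).
Variables (lam delta : vec R N) (B : 'M[R]_N) (q : 'I_N -> R -> R).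
Variables (S : set (vec R N)) (pbar : R -> vec R N -> vec R N).
Hypotheses (lam_ge0 : nonneg_vec lam) (delta_gt0 : forall i, 0 < delta i).
Hypotheses (B_ge0 : forall i j, 0 <= B i j) (S_ge0 : S `<=` @nonneg_vec R N).
Hypothesis q_adm : forall i, admissible_q (q i).
Hypothesis pbar0_equilibrium : forall s, S s ->
  is_equilibrium (sis_field lam delta B q s) (pbar 0 s).
Hypothesis pbar_perturbed : forall eps s, 0 < eps -> S s ->
  strictly_pos (pbar eps s) /\ perturbed_eq lam delta B q eps s (pbar eps s).

Let source (eps : R) : vec R N := fun i => lam i + eps.
Let rate (s : vec R N) : vec R N := fun i => (qvec q s i)^-1 * delta i.

Lemma qvec_gt0 s : S s -> forall i, 0 < qvec q s i.
Proof.
by move=> Ss i; case: (q_adm i) => q01 _ _ _ _; case/andP: (q01 _ (S_ge0 Ss i)).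
Qed.

Lemma rate_ge0 s : S s -> forall i, 0 <= rate s i.
Proof. by move=> Ss i; rewrite mulr_ge0 ?invr_ge0 ?ltW ?qvec_gt0. Qed.

Lemma pbar_balance eps s : 0 <= eps -> S s ->
  balance_eq B (source eps) (rate s) (pbar eps s).
Proof.
move=> eps_ge0 Ss i; have [->|eps_neq0] := eqVneq eps 0.
  have Q_neq0 : qvec q s i != 0 by rewrite gt_eqF ?qvec_gt0.
  have /eqP := (pbar0_equilibrium Ss).2 i; rewrite /sis_field subr_eq0 => /eqP E.
  by rewrite /source addr0 /rate -mulrA -E; field.
have eps_gt0 : 0 < eps by rewrite lt_neqAle eq_sym eps_neq0.
by have /eqP := (pbar_perturbed eps_gt0 Ss).2 i; rewrite subr_eq0 => /eqP.
Qed.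

Lemma pbar_le1 eps s : 0 <= eps -> S s -> forall i, pbar eps s i <= 1.
Proof.
move=> eps_ge0 Ss; have [->|eps_neq0] := eqVneq eps 0.
  by move=> i; case/andP: ((pbar0_equilibrium Ss).1 i).
have eps_gt0 : 0 < eps by rewrite lt_neqAle eq_sym eps_neq0.
apply: (balance_eq_le1 B_ge0 _ (rate_ge0 Ss)) (pbar_balance eps_ge0 Ss).
- by move=> i; rewrite /source /= ltr_wpDl.
- by move=> i; rewrite ltW //; apply: (pbar_perturbed eps_gt0 Ss).1.
Qed.

Lemma pbar_nondecreasing eps1 eps2 s : 0 <= eps1 -> eps1 <= eps2 -> 0 < eps2 ->
  S s -> forall i, pbar eps1 s i <= pbar eps2 s i.
Proof.
move=> eps1_ge0 eps12 eps2_gt0 Ss.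
apply: (balance_eq_le B_ge0 _ _ (pbar_le1 eps1_ge0 Ss) (pbar_perturbed eps2_gt0 Ss).1
  (pbar_balance eps1_ge0 Ss) (pbar_balance (ltW eps2_gt0) Ss)).
- by move=> i; rewrite /source /= lerD2l.
- by move=> i; rewrite /source /= ltr_wpDl.
Qed.

End Equilibria.

Theorem corollary1 (R : realType) (N : nat)
  (lam delta c : vec R N) (B : 'M[R]_N) (S : set (vec R N))
  (w : vec R N -> R) (q : 'I_N -> R -> R)
  (pbar : R -> vec R N -> vec R N) :
  nonneg_vec lam ->
  (forall i, 0 < delta i) ->
  (forall i j, 0 <= B i j) ->
  (forall i, B i i = 0) ->
  weakly_connected B ->
  ~ strongly_connected B ->
  S `<=` @nonneg_vec R N ->
  convex_subset S ->
  convex_on_nonneg w ->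
  nonneg_vec c ->
  (forall i, admissible_q (q i)) ->
  (* pbar^0(s) is the unique stable equilibrium of the SIS dynamics *)
  (forall s, S s ->
     stable_equilibrium (sis_field lam delta B q s) (pbar 0 s) /\
     (forall p, stable_equilibrium (sis_field lam delta B q s) p -> p = pbar 0 s)) ->
  (* for eps > 0, pbar^eps(s) is the unique strictly positive solution *)
  (forall eps s, 0 < eps -> S s ->
     strictly_pos (pbar eps s) /\ perturbed_eq lam delta B q eps s (pbar eps s) /\
     (forall p, strictly_pos p -> perturbed_eq lam delta B q eps s p -> p = pbar eps s)) ->
  forall eps1 eps2 : R, 0 <= eps1 -> eps1 <= eps2 ->
    (Fstar S w c pbar eps1 <= Fstar S w c pbar eps2)%E.
Proof.
move=> lam_ge0 delta_gt0 B_ge0 _ _ _ S_ge0 _ _ c_ge0 q_adm pbar0 pbar_pos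
  eps1 eps2 eps1_ge0 eps12.
have [<-|eps_neq] := eqVneq eps1 eps2; first exact: lexx.
have eps2_gt0 : 0 < eps2 by apply: le_lt_trans eps1_ge0 _; rewrite lt_neqAle eps_neq.
apply: Fstar_le_pointwise c_ge0 _ => s Ss.
apply: (pbar_nondecreasing lam_ge0 delta_gt0 B_ge0 S_ge0 q_adm) => //.
- by move=> s' Ss'; case: (pbar0 s' Ss') => -[].
- by move=> e s' e_gt0 Ss'; have [pos [bal _]] := pbar_pos e s' e_gt0 Ss'.
Qed.
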